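(* In the setting described in the context, let $\Lambda > 1$ be a constant such that for every $x \in \Omega$ and all nonnegative reals $a_0,\dots,a_q$ with $a_i = 0$ whenever $u_i(x) \leq -2\Lambda^{-1}$, one has $\sum_{i=0}^q a_i \leq \Lambda |\sum_{i=0}^q a_i N_i|$. Then for every $\gamma \in (0,\frac12)$ there exists $\bar\lambda$ such that for all $\lambda_0 \geq \bar\lambda$ the following holds: if $0 \leq k \leq q$ and $x \in \Omega$ satisfies $-\Lambda^{-1} \leq \hat u_k(x) \leq 0$, then $|d\hat u_k| \geq \Lambda^{-1}$ at $x$. In particular, $\hat\Sigma = \{\hat u_q = 0\}$ is a smooth hypersurface.
   Context: $n\ge3$; $u_0,\dots,u_q$ are non-constant linear (affine) functions on $\mathbb{R}^n$ and $\Omega=\bigcap_{m=0}^q\{u_m\le 0\}$ is a compact convex polytope with non-empty interior, such that: (a) for each $k$, $\{u_k>0\}\cap\bigcap_{m\neq k}\{u_m\le0\}\neq\emptyset$; (b) the Euclidean gradient of each $u_k$ is a unit vector $N_k$; (c) for $j<k$, if some $x\in\Omega$ has $u_j(x)=u_k(x)=0$ then $\langle N_j,N_k\rangle\le0$. Fix a smooth even $\eta:\mathbb{R}\to\mathbb{R}$ with $\eta(t)=|t|$ for $|t|\ge\frac12$ and $\eta''\ge0$. For $\gamma\in(0,\frac12)$, $\lambda_0>1$ put $\lambda_k=\gamma^{-k}\lambda_0$, $\hat u_0=u_0$, $\hat u_k=\frac12\big(\hat u_{k-1}+u_k+\lambda_k^{-1}\eta(\lambda_k(\hat u_{k-1}-u_k))\big)$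 for $1\le k\le q$. *)

From HB Require Import structures.
From mathcomp Require Import all_boot all_order all_algebra.
From mathcomp Require Import all_classical all_reals all_analysis.
Set Implicit Arguments. Unset Strict Implicit. Unset Printing Implicit Defensive.
Import Order.TTheory GRing.Theory Num.Theory.
Import numFieldNormedType.Exports.
Local Open Scope classical_set_scope.
Local Open Scope ring_scope.

Section Defs.
Variable R : realType.

Definition dotp n (x y : 'rV[R]_n) : R := \sum_(i < n) x 0 i * y 0 i.
Definition enorm n (x : 'rV[R]_n) : R := Num.sqrt (dotp x x).

Definition affine_fn n (N : 'rV[R]_n) (c : R) : 'rV[R]_n -> R :=
  fun x => dotp N x + c.

Definition grad n (f : 'rV[R]_n -> R) (x : 'rV[R]_n) : 'rV[R]_n :=
  \row_(i < n) ('D_(delta_mx 0 i) f x).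

Definition smooth_fun (f : R -> R) : Prop :=
  forall (k : nat) (t : R), derivable (derive1n k f) t 1.

Definition Omega n (q : nat) (N : nat -> 'rV[R]_n) (c : nat -> R) : set 'rV[R]_n :=
  [set x | forall m, (m <= q)%N -> affine_fn (N m) (c m) x <= 0].

Definition lam (gamma lambda0 : R) (k : nat) : R := (gamma ^- k) * lambda0.

Fixpoint uhat n (N : nat -> 'rV[R]_n) (c : nat -> R) (eta : R -> R)
    (gamma lambda0 : R) (k : nat) : 'rV[R]_n -> R :=
  match k with
  | 0%N => affine_fn (N 0%N) (c 0%N)
  | k'.+1 => fun x =>
      let a := uhat N c eta gamma lambda0 k' x in
      let b := affine_fn (N k'.+1) (c k'.+1) x in
      let l := lam gamma lambda0 k'.+1 in
      2^-1 * (a + b + l^-1 * eta (l * (a - b)))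
  end.

End Defs.

From HB Require Import structures.
From mathcomp Require Import all_boot all_order all_algebra.
From mathcomp Require Import all_classical all_reals all_analysis.
From mathcomp Require Import ring lra.
Set Implicit Arguments. Unset Strict Implicit. Unset Printing Implicit Defensive.
Import Order.TTheory GRing.Theory Num.Theory.
Import numFieldNormedType.Exports.
Local Open Scope classical_set_scope.
Local Open Scope ring_scope.

(* Each [uhat (k+1)] is the smoothed maximum
   [smax l a b = (a + b + l^-1 * eta (l * (a - b))) / 2] of [a = uhat k] and
   [b = u (k+1)], with [l = lambda (k+1)].  Its directional derivatives are the
   convex combination of those of [a] and [b] with weights [(1 + s) / 2] and
   [(1 - s) / 2], where [s = eta' (l * (a - b))]; so by induction the gradient of
   [uhat k] is [\sum_i w_i N_i] for a probability vector [w] supported on [0..k].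
   As [eta' = 1] on [t > 1/2] and [eta' = -1] on [t < -1/2], a weight survives only
   where the two arguments are [1/(2l)]-close, and [eta t <= |t| + 1] then shows
   that every [u i] with [w_i <> 0] is within [(1 - gamma^k) / lambda0 <= 1/lambda0]
   of [uhat k]; these gaps telescope because [gamma <= 1 - gamma].  Taking
   [lambdabar = 2 Lambda], at a point where [uhat k >= -1/Lambda] all those [u i]
   exceed [-2/Lambda], and the hypothesis on [Lambda] applied to [w] gives
   [1 <= Lambda |grad (uhat k)|].  Finally [uhat q >= u m] for every [m], so a zero
   of [uhat q] lies in [Omega]. *)

Section DirectionalDerivative.
Variables (R : realType) (V : normedModType R).

Lemma is_derive_line (f : V -> R) (x v : V) (d : R) :
  is_derive x v f d <-> is_derive (0 : R) (1 : R) (fun h : R => f (h *: v + x)) d.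
Proof.
set g := fun h : R => f (h *: v + x).
have growth_eq : (fun h : R => h^-1 *: ((f \o shift x) (h *: v) - f x)) =
                 (fun h : R => h^-1 *: ((g \o shift 0) (h *: 1) - g 0)).
  by apply/funext => h /=; rewrite /g addr0 scale0r add0r [h *: 1]mulr1.
have eqD : 'D_v f x = 'D_1 g 0 by rewrite /derive growth_eq.
split=> -[df <-]; rewrite ?eqD; apply: DeriveDef => //; exact/(derivable1P f x v).
Qed.

Lemma is_derive_comp_real (g : R -> R) (f : V -> R) (x v : V) (d : R) :
  derivable g (f x) 1 ->
  is_derive x v f d -> is_derive x v (g \o f) (derive1 g (f x) * d).
Proof.
move=> dg /is_derive_line fd; apply/is_derive_line.
set phi := fun h : R => f (h *: v + x).
have dphi : derivable phi 0 1 := @ex_derive _ _ _ _ _ _ _ fd.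
have phi0 : f x = phi 0 by rewrite /phi scale0r add0r.
rewrite phi0 in dg *.
rewrite -(@derive_val _ _ _ _ _ _ _ fd) -derive1E; split.
- apply/derivable1_diffP; change (differentiable (g \o phi) 0).
  by apply: differentiable_comp; apply/derivable1_diffP.
- by rewrite -derive1E -derive1_comp.
Qed.

End DirectionalDerivative.

Section Smoothing.
Variables (R : realType) (eta : R -> R).
Hypothesis eta_smooth : smooth_fun eta.
Hypothesis eta_even : forall t, eta (- t) = eta t.
Hypothesis eta_abs : forall t, 2^-1 <= `|t| -> eta t = `|t|.
Hypothesis eta_convex : forall t, 0 <= derive1n 2 eta t.

Lemma derivable_eta (t : R) : derivable eta t 1.
Proof. exact: (@eta_smooth 0 t). Qed.

Lemma derive1_eta_nondecr s t : s <= t -> derive1 eta s <= derive1 eta t.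
Proof.
have deta' y : derivable (derive1 eta) y 1 by exact: (@eta_smooth 1 y).
move=> le_st; apply: (@ger0_derive1_ndecr _ (derive1 eta) s t) => //.
- by move=> y _; exact: eta_convex.
- by apply: derivable_within_continuous => y _; exact: deta'.
Qed.

Lemma derive1_eta_gt t : 2^-1 < t -> derive1 eta t = 1.
Proof.
move=> ht; rewrite derive1E -[RHS](derive_id t 1).
apply: near_eq_derive; near=> y.
have hy : 2^-1 < y by near: y; exact: lt_nbhsr.
by rewrite eta_abs ger0_norm //; lra.
Unshelve. all: by end_near. Qed.

Lemma derive1_eta_lt t : t < - 2^-1 -> derive1 eta t = -1.
Proof.
move=> ht; rewrite derive1E -[RHS](@derive_val _ _ _ _ _ _ _ (is_deriveNid t 1)).
apply: near_eq_derive; near=> y.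
have hy : y < - 2^-1 by near: y; exact: lt_nbhsl.
by rewrite eta_abs ltr0_norm //; lra.
Unshelve. all: by end_near. Qed.

Lemma derive1_eta_bound t : -1 <= derive1 eta t <= 1.
Proof.
have := normr_ge0 t; have := ler_norm t; have := ler_norm (- t); rewrite normrN.
move=> hNt ht h0; apply/andP; split.
- rewrite -(@derive1_eta_lt (- (`|t| + 1))); last lra.
  by apply: derive1_eta_nondecr; lra.
- rewrite -(@derive1_eta_gt (`|t| + 1)); last lra.
  by apply: derive1_eta_nondecr; lra.
Qed.

Lemma eta_lipschitz s t : eta t - eta s <= `|t - s|.
Proof.
have deta (y : R) : is_derive y (1 : R) eta (derive1 eta y).
  by rewrite derive1E; apply: derivableP; exact: derivable_eta.
have ceta a b : {within `[a, b], continuous eta}.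
  by apply: derivable_within_continuous => y _; exact: derivable_eta.
case: (leP s t) => st.
  have [z _ ->] := MVT_segment st (fun y _ => deta y) (ceta s t).
  have /andP[_ h] := derive1_eta_bound z.
  rewrite ger0_norm ?subr_ge0 //; have : 0 <= t - s by lra.
  nra.
have [z _ e] := MVT_segment (ltW st) (fun y _ => deta y) (ceta t s).
have /andP[h _] := derive1_eta_bound z.
rewrite ltr0_norm ?subr_lt0 //; have : 0 <= s - t by lra.
nra.
Qed.

Lemma eta_half : eta 2^-1 = 2^-1.
Proof. by rewrite eta_abs ger0_norm //; lra. Qed.

Lemma abs_le_eta t : `|t| <= eta t.
Proof.
suff ge_id y : y <= eta y.
  case: (lerP 0 t) => ht; first by rewrite ger0_norm.
  by rewrite ltr0_norm // -eta_even.
case: (lerP y 2^-1) => hy.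
  have := eta_lipschitz y 2^-1; rewrite eta_half ger0_norm; lra.
by rewrite eta_abs ger0_norm //; lra.
Qed.

Lemma eta_le_abs_add1 t : eta t <= `|t| + 1.
Proof.
have := eta_lipschitz 2^-1 t; have := ler_normB t 2^-1.
rewrite eta_half [`|2^-1|]ger0_norm //; lra.
Qed.

Definition smax (l a b : R) : R := 2^-1 * (a + b + l^-1 * eta (l * (a - b))).

Lemma scaled_eta_bounds d l : 0 < l -> `|d| <= l^-1 * eta (l * d) <= `|d| + l^-1.
Proof.
move=> l_gt0; have il_ge0 : 0 <= l^-1 by rewrite invr_ge0 ltW.
have lK y : l^-1 * (l * y) = y by rewrite mulrA mulVf ?gt_eqF // mul1r.
have := ler_wpM2l il_ge0 (abs_le_eta (l * d)).
have := ler_wpM2l il_ge0 (eta_le_abs_add1 (l * d)).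
by rewrite normrM gtr0_norm // mulrDr mulr1 lK => -> ->.
Qed.

Lemma max_le_smax l a b : 0 < l -> Num.max a b <= smax l a b.
Proof.
move=> l_gt0; have /andP[le_eta _] := scaled_eta_bounds (a - b) l_gt0.
rewrite /smax ge_max; have := ler_norm (a - b); have := ler_norm (b - a).
by rewrite distrC; lra.
Qed.

Lemma smax_le_addl l a b :
  0 < l -> derive1 eta (l * (a - b)) != -1 -> smax l a b <= a + l^-1.
Proof.
move=> l_gt0 eta'_neq; have /andP[_ eta_le] := scaled_eta_bounds (a - b) l_gt0.
have : - 2^-1 <= l * (a - b).
  by rewrite leNgt; apply: contra eta'_neq => /derive1_eta_lt ->.
rewrite -ler_pdivrMl // => ba_le.
have : 0 < l^-1 by rewrite invr_gt0.
rewrite /smax; case: (lerP 0 (a - b)) => [/ger0_norm|/ltr0_norm] eq_ab;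
  rewrite eq_ab in eta_le; lra.
Qed.

Lemma smax_le_addr l a b :
  0 < l -> derive1 eta (l * (a - b)) != 1 -> smax l a b <= b + l^-1.
Proof.
move=> l_gt0 eta'_neq; have /andP[_ eta_le] := scaled_eta_bounds (a - b) l_gt0.
have : l * (a - b) <= 2^-1.
  by rewrite leNgt; apply: contra eta'_neq => /derive1_eta_gt ->.
rewrite -ler_pdivlMl // => ab_le.
have : 0 < l^-1 by rewrite invr_gt0.
rewrite /smax; case: (lerP 0 (a - b)) => [/ger0_norm|/ltr0_norm] eq_ab;
  rewrite eq_ab in eta_le; lra.
Qed.

Lemma is_derive_smax (V : normedModType R) (A B : V -> R) (x v : V) (dA dB l : R) :
  l != 0 -> is_derive x v A dA -> is_derive x v B dB ->
  is_derive x v (fun y => smax l (A y) (B y))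
    ((1 + derive1 eta (l * (A x - B x))) / 2 * dA +
     (1 - derive1 eta (l * (A x - B x))) / 2 * dB).
Proof.
move=> l_neq0 dA_is dB_is.
have deta := is_derive_comp_real (@derivable_eta _) (is_deriveZ l (is_deriveB dA_is dB_is)).
have dsum := is_deriveD (is_deriveD dA_is dB_is) (is_deriveZ l^-1 deta).
apply: is_derive_eq (is_deriveZ 2^-1 dsum) _.
by rewrite /GRing.scale /=; field.
Qed.

End Smoothing.

Section Euclidean.
Variables (R : realType) (n : nat).
Implicit Types (N G v x : 'rV[R]_n).

Lemma dotpDl G1 G2 v : dotp (G1 + G2) v = dotp G1 v + dotp G2 v.
Proof. by rewrite /dotp -big_split; apply: eq_bigr => i _; rewrite !mxE mulrDl. Qed.

Lemma dotpZl a G v : dotp (a *: G) v = a * dotp G v.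
Proof. by rewrite /dotp mulr_sumr; apply: eq_bigr => i _; rewrite !mxE mulrA. Qed.

Lemma dotp_delta_mx G j : dotp G (delta_mx 0 j) = G 0 j.
Proof.
rewrite /dotp (bigD1 j) //= big1 => [|i ij]; last by rewrite mxE (negbTE ij) andbF mulr0.
by rewrite mxE !eqxx mulr1 addr0.
Qed.

Lemma enorm0 : enorm (0 : 'rV[R]_n) = 0.
Proof. by rewrite /enorm /dotp big1 ?sqrtr0 // => i _; rewrite mxE mul0r. Qed.

Lemma affine_fn_line N c (h : R) v x :
  affine_fn N c (h *: v + x) = h * dotp N v + affine_fn N c x.
Proof.
rewrite /affine_fn /dotp addrA mulr_sumr -big_split; congr (_ + _).
by apply: eq_bigr => i _; rewrite !mxE mulrDr mulrCA.
Qed.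

Lemma is_derive_affine_fn N c x v : is_derive x v (affine_fn N c) (dotp N v).
Proof.
apply/is_derive_line.
have -> : (fun h : R => affine_fn N c (h *: v + x)) =
          (dotp N v) \*: id + cst (affine_fn N c x).
  by apply/funext => h; rewrite affine_fn_line /= mulrC.
have := is_deriveD (is_deriveZ (dotp N v) (is_derive_id (0 : R) 1))
  (is_derive_cst (affine_fn N c x) (0 : R) 1).
by rewrite addr0 [_ *: 1]mulr1.
Qed.

Lemma grad_eq (f : 'rV[R]_n -> R) G x :
  (forall v, is_derive x v f (dotp G v)) -> grad f x = G.
Proof.
move=> df; apply/rowP => j.
by rewrite mxE (@derive_val _ _ _ _ _ _ _ (df _)) dotp_delta_mx.
Qed.

End Euclidean.

Lemma sum_indicatorZ (R : pzRingType) (V : lmodType R) (F : nat -> V) m j :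
  (j < m)%N -> \sum_(i < m) ((i : nat) == j)%:R *: F i = F j.
Proof.
move=> lt_jm; rewrite (bigD1 (Ordinal lt_jm)) //= eqxx scale1r big1 ?addr0 // => i.
by rewrite -val_eqE /= => /negbTE ->; rewrite scale0r.
Qed.

Lemma sum_indicator (R : pzRingType) m j :
  (j < m)%N -> \sum_(i < m) ((i : nat) == j)%:R = 1 :> R.
Proof.
move=> lt_jm; rewrite -[RHS](sum_indicatorZ (fun=> 1 : R^o) lt_jm).
by apply: eq_bigr => i _; rewrite [_ *: _]mulr1.
Qed.

Section SmoothedMaxima.
Variables (R : realType) (n q : nat) (N : nat -> 'rV[R]_n) (c : nat -> R).
Variables (eta : R -> R) (gamma lambda0 : R).
Hypothesis eta_smooth : smooth_fun eta.
Hypothesis eta_even : forall t, eta (- t) = eta t.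
Hypothesis eta_abs : forall t, 2^-1 <= `|t| -> eta t = `|t|.
Hypothesis eta_convex : forall t, 0 <= derive1n 2 eta t.
Hypothesis gamma_gt0 : 0 < gamma.
Hypothesis gamma_lt_half : gamma < 2^-1.
Hypothesis lambda0_gt0 : 0 < lambda0.

Local Notation u i := (affine_fn (N i) (c i)).
Local Notation uh k := (uhat N c eta gamma lambda0 k).
Local Notation lambda k := (lam gamma lambda0 k).

Lemma uhatS k x : uh k.+1 x = smax eta (lambda k.+1) (uh k x) (u k.+1 x).
Proof. by []. Qed.

Lemma lam_gt0 k : 0 < lambda k.
Proof. by rewrite /lam mulr_gt0 // invr_gt0 exprn_gt0. Qed.

Lemma affine_le_uhat k m x : (m <= k)%N -> u m x <= uh k x.
Proof.
have max_le j a b := max_le_smax eta_smooth eta_even eta_abs eta_convex a b (lam_gt0 j).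
elim: k m => [|k IHk] m; first by rewrite leqn0 => /eqP ->.
rewrite leq_eqVlt ltnS uhatS => /orP[/eqP -> | le_mk].
  by apply: le_trans (max_le _ _ _); rewrite le_max lexx orbT.
by apply: le_trans (IHk _ le_mk) (le_trans _ (max_le _ _ _)); rewrite le_max lexx.
Qed.

Definition smoothing_gap k := (1 - gamma ^+ k) / lambda0.

Lemma smoothing_gap_ge0 k : 0 <= smoothing_gap k.
Proof.
rewrite /smoothing_gap divr_ge0 ?subr_ge0 ?(ltW lambda0_gt0) //.
by rewrite exprn_ile1 ?(ltW gamma_gt0) //; have := gamma_lt_half; lra.
Qed.

Lemma smoothing_gap_le k : smoothing_gap k <= lambda0^-1.
Proof.
rewrite /smoothing_gap ler_pdivrMr // mulVf ?gt_eqF // gerBl.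
by rewrite exprn_ge0 ?ltW.
Qed.

Lemma smoothing_gapS k : smoothing_gap k + (lambda k.+1)^-1 <= smoothing_gap k.+1.
Proof.
rewrite /smoothing_gap /lam invfM invrK -mulrDl ler_pM2r ?invr_gt0 // exprS.
have : 0 < gamma ^+ k by rewrite exprn_gt0.
have := gamma_lt_half; nra.
Qed.

Definition gradient_weights k x (w : nat -> R) :=
  [/\ forall i, 0 <= w i, \sum_(i < q.+1) w i = 1, forall i, (k < i)%N -> w i = 0,
      forall i, w i != 0 -> uh k x - smoothing_gap k <= u i x &
      forall v, is_derive x v (uh k) (dotp (\sum_(i < q.+1) w i *: N i) v)].

Lemma gradient_weights0 x : gradient_weights 0 x (fun i => (i == 0)%N%:R).
Proof.
split.
- by move=> i; exact: ler0n.
- exact: sum_indicator.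
- by move=> [|i].
- move=> [|i] /=; last by rewrite eqxx.
  by rewrite /smoothing_gap expr0 subrr mul0r subr0.
- by move=> v; rewrite sum_indicatorZ //; exact: is_derive_affine_fn.
Qed.

Lemma gradient_weightsS k x w : (k < q)%N -> gradient_weights k x w ->
  let s := derive1 eta (lambda k.+1 * (uh k x - u k.+1 x)) in
  gradient_weights k.+1 x (fun i => (1 + s) / 2 * w i + (1 - s) / 2 * (i == k.+1)%N%:R).
Proof.
move=> lt_kq [w_ge0 w_sum w_supp w_active w_deriv] s.
have /andP[s_ge s_le] : -1 <= s <= 1 := derive1_eta_bound eta_smooth eta_abs eta_convex _.
have lam_gt0' := lam_gt0 k.+1.
have gapS := smoothing_gapS k; have gap_ge0 := smoothing_gap_ge0 k.
split.
- by move=> i; rewrite addr_ge0 // mulr_ge0 ?ler0n ?w_ge0 //; lra.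
- by rewrite big_split /= -!mulr_sumr w_sum sum_indicator //; lra.
- by move=> i lt_ki; rewrite /= w_supp ?(ltnW lt_ki) // gtn_eqF // !mulr0 addr0.
- move=> i; cbv beta; rewrite uhatS; have [-> | ne_i] := eqVneq i k.+1.
    rewrite w_supp // mulr0 add0r mulr1 => nz.
    have : s != 1 by apply: contraNneq nz => ->; rewrite subrr mul0r.
    move=> /(smax_le_addr eta_smooth eta_even eta_abs eta_convex lam_gt0'); lra.
  rewrite mulr0 addr0 mulf_eq0 negb_or => /andP[s_nz /w_active].
  have : s != -1 by apply: contraNneq s_nz => ->; rewrite addrN mul0r.
  move=> /(smax_le_addl eta_smooth eta_even eta_abs eta_convex lam_gt0'); lra.
- move=> v; apply: (is_derive_eq (is_derive_smax eta_smooth (lt0r_neq0 lam_gt0')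
    (w_deriv v) (is_derive_affine_fn (N k.+1) (c k.+1) x v))).
  rewrite [in RHS](eq_bigr (fun i : 'I_q.+1 => (1 + s) / 2 *: (w i *: N i) +
                             (1 - s) / 2 *: (((i : nat) == k.+1)%:R *: N i))) => [|i _].
    by rewrite big_split /= -!scaler_sumr sum_indicatorZ // dotpDl !dotpZl /s.
  by rewrite scalerDl !scalerA.
Qed.

Lemma exists_gradient_weights k x : (k <= q)%N -> exists w, gradient_weights k x w.
Proof.
elim: k => [_|k IHk lt_kq]; first by exists (fun i => (i == 0)%N%:R); exact: gradient_weights0.
have [w w_grad] := IHk (ltnW lt_kq).
exact: ex_intro _ _ (gradient_weightsS lt_kq w_grad).
Qed.

Lemma inv_le_enorm_grad_uhat (Lambda : R) k x :
  0 < Lambda -> 2 * Lambda <= lambda0 ->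
  (forall a : nat -> R, (forall i, (i <= q)%N -> 0 <= a i) ->
    (forall i, (i <= q)%N -> u i x <= - (2 / Lambda) -> a i = 0) ->
    \sum_(i < q.+1) a i <= Lambda * enorm (\sum_(i < q.+1) a i *: N i)) ->
  (k <= q)%N -> - Lambda^-1 <= uh k x -> Lambda^-1 <= enorm (grad (uh k) x).
Proof.
move=> Lambda_gt0 lambda0_ge Lambda_x le_kq uh_ge.
have [w [w_ge0 w_sum _ w_active w_deriv]] := exists_gradient_weights x le_kq.
rewrite (grad_eq w_deriv) -(ler_pM2l Lambda_gt0) mulfV ?gt_eqF // -w_sum.
apply: Lambda_x => [i _ | i _ u_le]; first exact: w_ge0.
apply/eqP; apply: contraTT u_le => /w_active; rewrite -ltNge.
have := smoothing_gap_le k.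
have : lambda0^-1 <= (2 * Lambda)^-1 by rewrite lef_pV2 ?posrE ?mulr_gt0.
have : 0 < Lambda^-1 by rewrite invr_gt0.
rewrite invfM; lra.
Qed.

End SmoothedMaxima.

Unset Implicit Arguments.

Theorem lemma2p10 (R : realType) (n q : nat) (N : nat -> 'rV[R]_n) (c : nat -> R)
  (eta : R -> R) (Lambda : R) :
  (3 <= n)%N ->
  (* Omega is a compact convex polytope with non-empty interior *)
  compact (Omega q N c) ->
  (interior (Omega q N c)) !=set0 ->
  (* (a) *)
  (forall k, (k <= q)%N -> exists x : 'rV[R]_n,
      0 < affine_fn (N k) (c k) x /\
      forall m, (m <= q)%N -> m <> k -> affine_fn (N m) (c m) x <= 0) ->
  (* (b) gradients are unit vectors *)
  (forall k, (k <= q)%N -> enorm (N k) = 1) ->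
  (* (c) *)
  (forall j k, (j < k)%N -> (k <= q)%N ->
      (exists x, Omega q N c x /\ affine_fn (N j) (c j) x = 0 /\
                 affine_fn (N k) (c k) x = 0) ->
      dotp (N j) (N k) <= 0) ->
  (* eta: smooth, even, eta t = |t| for |t| >= 1/2, eta'' >= 0 *)
  smooth_fun eta ->
  (forall t, eta (- t) = eta t) ->
  (forall t, 2^-1 <= `|t| -> eta t = `|t|) ->
  (forall t, 0 <= derive1n 2 eta t) ->
  (* the constant Lambda *)
  1 < Lambda ->
  (forall x, Omega q N c x -> forall a : nat -> R,
      (forall i, (i <= q)%N -> 0 <= a i) ->
      (forall i, (i <= q)%N -> affine_fn (N i) (c i) x <= - (2 / Lambda) -> a i = 0) ->
      \sum_(i < q.+1) a i <= Lambda * enorm (\sum_(i < q.+1) a i *: N i)) ->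
  forall gamma : R, 0 < gamma < 2^-1 ->
  exists lambdabar : R, forall lambda0 : R, 1 < lambda0 -> lambdabar <= lambda0 ->
    (forall k, (k <= q)%N -> forall x, Omega q N c x ->
       - Lambda^-1 <= uhat N c eta gamma lambda0 k x <= 0 ->
       Lambda^-1 <= enorm (grad (uhat N c eta gamma lambda0 k) x))
    /\
    (* in particular 0 is a regular value of the smooth function uhat_q *)
    (forall x, uhat N c eta gamma lambda0 q x = 0 ->
       grad (uhat N c eta gamma lambda0 q) x != 0).
Proof.
move=> _ _ _ _ _ _ eta_smooth eta_even eta_abs eta_convex Lambda_gt1 Lambda_spec
  gamma /andP[gamma_gt0 gamma_lt_half].
exists (2 * Lambda) => lambda0 lambda0_gt1 lambda0_ge.
have lambda0_gt0 : 0 < lambda0 by lra.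
have Lambda_gt0 : 0 < Lambda by lra.
have grad_ge k x (le_kq : (k <= q)%N) (Ox : Omega q N c x) :=
  inv_le_enorm_grad_uhat eta_smooth eta_even eta_abs eta_convex gamma_gt0 gamma_lt_half
    lambda0_gt0 Lambda_gt0 lambda0_ge (Lambda_spec x Ox) le_kq.
split=> [k le_kq x Ox /andP[uh_ge _] | x uh0]; first exact: grad_ge.
have Ox : Omega q N c x.
  move=> m le_mq; rewrite -uh0.
  exact: (affine_le_uhat N c eta_smooth eta_even eta_abs eta_convex
    gamma_gt0 lambda0_gt0 x le_mq).
apply: contraTneq (grad_ge _ _ (leqnn q) Ox _) => [grad0 | ].
  by rewrite grad0 enorm0 -ltNge invr_gt0.
by rewrite uh0 oppr_le0 invr_ge0 ltW.
Qed.
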